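(* Let $x_0\in\mathbb{R}\cup\{+\infty\}$, $T<x_0$, $I:=[T,x_0)$, and let $\phi_1,\phi_2\in C^1(I)$ with $\phi_2(x)=o(\phi_1(x))$ as $x\to x_0$, $\phi_1(x)\neq0$, $\phi_2(x)\neq0$ and $W(x):=W(\phi_1,\phi_2;x)\neq0$ for all $x\in I$. Put $\Phi(x):=\phi_2(T)\phi_1(x)-\phi_1(T)\phi_2(x)$. Then, as $x\to x_0$, $$\Phi(x)\sim\phi_2(T)\phi_1(x),\qquad W(x)\Phi(x)^{-2}\sim\frac{1}{\phi_2(T)^2}\Big(\frac{\phi_2(x)}{\phi_1(x)}\Big)',\qquad \int_x^{x_0}W(t)\Phi(t)^{-2}\,dt\sim-\frac{1}{\phi_2(T)^2}\,\frac{\phi_2(x)}{\phi_1(x)},$$ and for every $x\in(T,x_0)$ the improper integral converges with $$\int_x^{x_0}W(t)\Phi(t)^{-2}\,dt=-\frac{1}{\phi_2(T)}\,\frac{\phi_2(x)}{\Phi(x)}.$$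
   Context: $W(g,h;x):=g(x)h'(x)-g'(x)h(x)$. Limits as $x\to x_0$ are for $x<x_0$. *)

From Stdlib Require Import Reals.
From Coquelicot Require Import Coquelicot.
Open Scope R_scope.

Definition left_filter (x0 : Rbar) : (R -> Prop) -> Prop :=
  match x0 with
  | Finite a => at_left a
  | _ => Rbar_locally x0
  end.

Definition in_I (T : R) (x0 : Rbar) (x : R) : Prop := T <= x /\ Rbar_lt x x0.

Definition C1_on (T : R) (x0 : Rbar) (f df : R -> R) : Prop :=
  forall x, in_I T x0 x ->
    filterlim (fun h => (f (x + h) - f x) / h)
      (within (fun h => h <> 0 /\ T <= x + h) (locally 0)) (locally (df x)) /\
    filterlim df (within (fun y => T <= y) (locally x)) (locally (df x)).

Definition Wr (g dg h dh : R -> R) (x : R) : R := g x * dh x - dg x * h x.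

From Stdlib Require Import Reals Lra.
From Coquelicot Require Import Coquelicot.
Open Scope R_scope.

(* Put [r := phi2 / phi1], so that [W = phi1^2 r'] and
   [Phi = phi2 T * phi1 * (1 - phi1 T / phi2 T * r)].  Then [W / Phi^2] is the
   derivative of [phi2 / (phi2 T * Phi) = r / (phi2 T^2 (1 - phi1 T / phi2 T * r))],
   which tends to 0 at [x0] because [r] does; this evaluates the improper integral,
   and each equivalence is obtained by factoring out a function of [r] tending
   to 1.  [Phi] does not vanish on [(T, x0)] since [r' = W / phi1^2 <> 0] makes [r]
   injective there (mean value theorem). *)

#[global] Instance left_filter_proper (x0 : Rbar) : ProperFilter (left_filter x0).
Proof.
  destruct x0; simpl; [apply at_left_proper_filter | apply Rbar_locally_filter ..].
Qed.

#[global] Instance left_filter_filter (x0 : Rbar) : Filter (left_filter x0) :=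
  filter_filter.

Lemma left_filter_right_of (x : R) (x0 : Rbar) :
  Rbar_lt x x0 -> left_filter x0 (fun y => x < y /\ Rbar_lt y x0).
Proof.
  destruct x0 as [a| |]; simpl; intros Hx; try contradiction.
  - assert (Hd : 0 < a - x) by lra.
    exists (mkposreal _ Hd). intros y Hy Hya.
    change (Rabs (y - a) < a - x) in Hy. apply Rabs_def2 in Hy. split; lra.
  - exists x. intros y Hy. split; simpl; auto.
Qed.

Lemma Rle_Rbar_lt_trans (y x : R) (x0 : Rbar) : y <= x -> Rbar_lt x x0 -> Rbar_lt y x0.
Proof. intros Hyx Hx. apply Rbar_le_lt_trans with x; simpl; auto. Qed.

Lemma is_equiv_of_factor {F : (R -> Prop) -> Prop} {FF : Filter F} (f g h : R -> R) :
  F (fun x => f x = g x * h x) -> filterlim h F (locally 1) -> is_equiv F f g.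
Proof.
  intros Hfgh Hh eps.
  assert (Hnear := Hh _ (locally_ball 1 eps)). unfold filtermap in Hnear.
  generalize (filter_and _ _ Hfgh Hnear).
  apply filter_imp. intros x [Hx Hhx].
  change (Rabs (g x - f x) <= eps * Rabs (g x)). change (Rabs (h x - 1) < eps) in Hhx.
  rewrite Hx. replace (g x - g x * h x) with (g x * (1 - h x)) by ring.
  rewrite Rabs_mult, Rmult_comm, Rabs_minus_sym.
  apply Rmult_le_compat_r; [apply Rabs_pos | lra].
Qed.

Lemma filterlim_div_of_is_domin {F : (R -> Prop) -> Prop} {FF : Filter F} (f g : R -> R) :
  is_domin F f g -> F (fun x => f x <> 0) ->
  filterlim (fun x => g x / f x) F (locally 0).
Proof.
  intros Hfg Hf P [eps HP].
  assert (Heps : 0 < eps / 2) by (generalize (cond_pos eps); lra).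
  unfold filtermap.
  generalize (filter_and _ _ (Hfg (mkposreal _ Heps)) Hf). apply filter_imp.
  intros x [Hx Hfx]. apply HP.
  change (Rabs (g x) <= eps / 2 * Rabs (f x)) in Hx. change (Rabs (g x / f x - 0) < eps).
  assert (Hpos : 0 < Rabs (f x)) by (apply Rabs_pos_lt; auto).
  rewrite Rminus_0_r, Rabs_div by auto.
  apply Rlt_le_trans with (eps / 2 + eps / 2); [|lra].
  apply Rle_lt_trans with (eps / 2); [|lra].
  apply Rmult_le_reg_r with (Rabs (f x)); auto.
  unfold Rdiv at 1. rewrite Rmult_assoc, Rinv_l by lra. lra.
Qed.

Lemma neq_of_derive_neq0 (f df : R -> R) (a b : R) :
  a < b ->
  (forall c, a < c < b -> is_derive f c (df c)) ->
  (forall c, a <= c <= b -> continuity_pt f c) ->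
  (forall c, a <= c <= b -> df c <> 0) ->
  f a <> f b.
Proof.
  intros Hab Hd Hc Hdf Hf.
  destruct (MVT_gen f a b df) as [c [Hcab Hmvt]];
    rewrite ?Rmin_left, ?Rmax_right in * by lra; auto.
  apply (Hdf c Hcab). rewrite Hf, Rminus_diag in Hmvt.
  symmetry in Hmvt. apply Rmult_integral in Hmvt. lra.
Qed.

Lemma is_RInt_gen_of_primitive (F : (R -> Prop) -> Prop) {FF : Filter F}
    (G g : R -> R) (x L : R) :
  F (fun v => x < v /\ forall c, x <= c <= v -> is_derive G c (g c) /\ continuous g c) ->
  filterlim G F (locally L) ->
  is_RInt_gen g (at_point x) F (L - G x).
Proof.
  intros HG Hlim P HP.
  assert (Hshift : filterlim (fun v => G v - G x) F (locally (L - G x))).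
  { apply (filterlim_comp _ _ _ G (fun u => u - G x) _ (locally L)); auto.
    apply (ex_derive_continuous (fun u => u - G x)). auto_derive. trivial. }
  apply (Filter_prod _ _ _ (fun u => u = x)
           (fun v => (x < v /\ forall c, x <= c <= v -> is_derive G c (g c) /\ continuous g c)
                     /\ P (G v - G x))).
  - reflexivity.
  - assert (HPv := Hshift P HP). unfold filtermap in HPv.
    exact (filter_and _ _ HG HPv).
  - intros u v -> [[Hxv Hv] HPv]. exists (G v - G x). split; auto.
    apply (is_RInt_derive G g); rewrite Rmin_left, Rmax_right by lra; apply Hv.
Qed.

Section C1_on.

Variables (T : R) (x0 : Rbar) (f df : R -> R).
Hypothesis Hf : C1_on T x0 f df.

Lemma C1_on_is_derive (x : R) : T < x -> Rbar_lt x x0 -> is_derive f x (df x).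
Proof.
  intros HTx Hx. destruct (Hf x) as [Hq _]; [split; [lra | exact Hx] |].
  apply is_derive_Reals. intros eps Heps.
  destruct (Hq _ (locally_ball (df x) (mkposreal _ Heps))) as [d Hd].
  assert (Hd' : 0 < Rmin d (x - T)) by (apply Rmin_pos; [apply cond_pos | lra]).
  exists (mkposreal _ Hd'). intros h Hh0 Hh. simpl in Hh.
  assert (Hhd : Rabs h < d) by (eapply Rlt_le_trans; [exact Hh | apply Rmin_l]).
  assert (HhT : Rabs h < x - T) by (eapply Rlt_le_trans; [exact Hh | apply Rmin_r]).
  apply Hd.
  - change (Rabs (h - 0) < d). rewrite Rminus_0_r. exact Hhd.
  - apply Rabs_def2 in HhT. split; [exact Hh0 | lra].
Qed.

Lemma C1_on_continuous (x : R) : T < x -> Rbar_lt x x0 -> continuous f x.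
Proof.
  intros HTx Hx. apply (ex_derive_continuous f). exists (df x). now apply C1_on_is_derive.
Qed.

Lemma C1_on_continuous_derive (x : R) : T < x -> Rbar_lt x x0 -> continuous df x.
Proof.
  intros HTx Hx. destruct (Hf x) as [_ Hdf]; [split; [lra | exact Hx] |].
  intros P HP. assert (Hnear := Hdf P HP). unfold filtermap, within in Hnear |- *.
  assert (HT : locally x (fun y => T < y)).
  { apply (locally_interval _ x T p_infty); simpl; auto. }
  generalize (filter_and _ _ Hnear HT). apply filter_imp.
  intros y [Hy HTy]. apply Hy. lra.
Qed.

Lemma C1_on_increment_bound :
  Rbar_lt T x0 ->
  exists d : posreal, forall y, T < y < T + d -> Rabs (f y - f T) <= (y - T) * (1 + Rabs (df T)).
Proof.
  intros HT. destruct (Hf T) as [Hq _]; [split; [lra | exact HT] |].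
  destruct (Hq _ (locally_ball (df T) (mkposreal _ Rlt_0_1))) as [d Hd].
  exists d. intros y Hy.
  assert (Hquot : Rabs ((f (T + (y - T)) - f T) / (y - T) - df T) < 1).
  { apply Hd; [| split; lra]. change (Rabs (y - T - 0) < d).
    rewrite Rminus_0_r, Rabs_right; lra. }
  replace (T + (y - T)) with y in Hquot by ring.
  replace (f y - f T) with ((f y - f T) / (y - T) * (y - T)) by (field; lra).
  rewrite Rabs_mult, Rmult_comm, (Rabs_right (y - T)) by lra.
  apply Rmult_le_compat_l; [lra |].
  replace ((f y - f T) / (y - T)) with (((f y - f T) / (y - T) - df T) + df T) by ring.
  generalize (Rabs_triang ((f y - f T) / (y - T) - df T) (df T)). lra.
Qed.

(* [C1_on] says nothing about [f] left of [T]; freezing it there at [f T] gives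
   a function continuous on [[T, x0)], as the mean value theorem requires. *)
Lemma C1_on_continuity_pt_Rmax (c : R) :
  T <= c -> Rbar_lt c x0 -> continuity_pt (fun y => f (Rmax T y)) c.
Proof.
  intros HTc Hc. apply continuity_pt_filterlim. destruct (Rle_lt_or_eq_dec _ _ HTc) as [HTc' | <-].
  - apply (ex_derive_continuous (fun y => f (Rmax T y))). exists (df c).
    apply (is_derive_ext_loc f); [| now apply C1_on_is_derive].
    apply (locally_interval _ c T p_infty); simpl; auto.
    intros y HTy _. now rewrite Rmax_right by lra.
  - destruct C1_on_increment_bound as [d Hd]; [exact Hc |].
    set (K := 1 + Rabs (df T)).
    assert (HK : 0 < K) by (generalize (Rabs_pos (df T)); unfold K; lra).
    intros P [eps HP]. rewrite Rmax_left in HP by lra.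
    assert (Hdelta : 0 < Rmin d (eps / K)).
    { apply Rmin_pos; [apply cond_pos | apply Rdiv_lt_0_compat; [apply cond_pos | exact HK]]. }
    exists (mkposreal _ Hdelta). intros y Hy. apply HP.
    change (Rabs (y - T) < Rmin d (eps / K)) in Hy. apply Rabs_def2 in Hy.
    change (Rabs (f (Rmax T y) - f T) < eps).
    destruct (Rle_lt_dec y T) as [HyT | HTy].
    + rewrite Rmax_left, Rminus_diag, Rabs_R0 by exact HyT. apply cond_pos.
    + rewrite Rmax_right by lra.
      assert (Hye : (y - T) * K < eps).
      { apply (Rmult_lt_reg_r (/ K)); [now apply Rinv_0_lt_compat |].
        rewrite Rmult_assoc, Rinv_r by lra. generalize (Rmin_r d (eps / K)). unfold Rdiv. lra. }
      assert (Hyd : y < T + d) by (generalize (Rmin_l d (eps / K)); lra).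
      assert (Hinc := Hd y (conj HTy Hyd)). fold K in Hinc. lra.
Qed.

End C1_on.

Section Wronskian_quotient.

Variables (x0 : Rbar) (T : R) (phi1 dphi1 phi2 dphi2 : R -> R).
Hypotheses (HT : Rbar_lt T x0) (C1_phi1 : C1_on T x0 phi1 dphi1) (C1_phi2 : C1_on T x0 phi2 dphi2).
Hypotheses (Hphi1 : forall x, in_I T x0 x -> phi1 x <> 0) (Hphi2T : phi2 T <> 0).
Hypothesis (HW : forall x, in_I T x0 x -> Wr phi1 dphi1 phi2 dphi2 x <> 0).

Let W := Wr phi1 dphi1 phi2 dphi2.
Let Phi x := phi2 T * phi1 x - phi1 T * phi2 x.
Let g t := W t * / (Phi t ^ 2).
Let ratio y := phi2 y / phi1 y.
Let defect x := 1 - phi1 T / phi2 T * ratio x.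
Let primitive y := / phi2 T * (phi2 y / Phi y).

Lemma phi1_neq0 (x : R) : T <= x -> Rbar_lt x x0 -> phi1 x <> 0.
Proof. intros HTx Hx. apply Hphi1. split; [exact HTx | exact Hx]. Qed.

Lemma ratio_is_derive (x : R) :
  T < x -> Rbar_lt x x0 -> is_derive ratio x (W x / phi1 x ^ 2).
Proof.
  intros HTx Hx.
  replace (W x / phi1 x ^ 2) with ((dphi2 x * phi1 x - phi2 x * dphi1 x) / phi1 x ^ 2)
    by (unfold W, Wr, Rdiv; ring).
  apply is_derive_div; [apply (C1_on_is_derive T x0) .. |]; auto.
  apply phi1_neq0; [lra | exact Hx].
Qed.

Lemma ratio_neq_ratio_T (x : R) : T < x -> Rbar_lt x x0 -> ratio T <> ratio x.
Proof.
  intros HTx Hx.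
  assert (Hmvt := neq_of_derive_neq0 (fun y => ratio (Rmax T y)) (fun y => W y / phi1 y ^ 2) T x HTx).
  cbv beta in Hmvt. rewrite Rmax_left, Rmax_right in Hmvt by lra. apply Hmvt.
  - intros c Hc. apply (is_derive_ext_loc ratio).
    + apply (locally_interval _ c T p_infty); simpl; [lra | exact I |].
      intros y HTy _. now rewrite Rmax_right by lra.
    + apply ratio_is_derive; [lra | apply (Rle_Rbar_lt_trans _ x); [lra | exact Hx]].
  - intros c Hc. assert (Hc0 : Rbar_lt c x0) by (apply (Rle_Rbar_lt_trans _ x); [lra | exact Hx]).
    apply (continuity_pt_div (fun y => phi2 (Rmax T y)) (fun y => phi1 (Rmax T y))).
    + apply (C1_on_continuity_pt_Rmax T x0 phi2 dphi2); [exact C1_phi2 | lra | exact Hc0].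
    + apply (C1_on_continuity_pt_Rmax T x0 phi1 dphi1); [exact C1_phi1 | lra | exact Hc0].
    + apply Hphi1. split; [apply Rmax_l | now rewrite Rmax_right by lra].
  - intros c Hc.
    assert (HcI : in_I T x0 c) by (split; [lra | apply (Rle_Rbar_lt_trans _ x); [lra | exact Hx]]).
    unfold Rdiv. apply Rmult_integral_contrapositive_currified; [now apply HW |].
    apply Rinv_neq_0_compat, pow_nonzero. now apply Hphi1.
Qed.

Lemma Phi_neq0 (x : R) : T < x -> Rbar_lt x x0 -> Phi x <> 0.
Proof.
  intros HTx Hx.
  assert (HT1 := phi1_neq0 T (Rle_refl T) HT). assert (Hx1 := phi1_neq0 x ltac:(lra) Hx).
  replace (Phi x) with (phi1 T * phi1 x * (ratio T - ratio x)) by (unfold Phi, ratio; field; auto).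
  repeat apply Rmult_integral_contrapositive_currified; auto.
  apply Rminus_eq_contra. now apply ratio_neq_ratio_T.
Qed.

Lemma Phi_factor (x : R) : T < x -> Rbar_lt x x0 -> Phi x = phi2 T * phi1 x * defect x.
Proof.
  intros HTx Hx. assert (Hx1 := phi1_neq0 x ltac:(lra) Hx).
  unfold Phi, defect, ratio. field. auto.
Qed.

Lemma defect_neq0 (x : R) : T < x -> Rbar_lt x x0 -> defect x <> 0.
Proof.
  intros HTx Hx Hd. apply (Phi_neq0 x HTx Hx). rewrite (Phi_factor x HTx Hx), Hd. ring.
Qed.

Lemma Phi_is_derive (x : R) :
  T < x -> Rbar_lt x x0 -> is_derive Phi x (phi2 T * dphi1 x - phi1 T * dphi2 x).
Proof.
  intros HTx Hx.
  apply (is_derive_minus (fun y => phi2 T * phi1 y) (fun y => phi1 T * phi2 y));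
    apply is_derive_scal; apply (C1_on_is_derive T x0); auto.
Qed.

Lemma Phi_continuous (x : R) : T < x -> Rbar_lt x x0 -> continuous Phi x.
Proof.
  intros HTx Hx. apply (ex_derive_continuous Phi). eexists. now apply Phi_is_derive.
Qed.

Lemma primitive_is_derive (x : R) : T < x -> Rbar_lt x x0 -> is_derive primitive x (g x).
Proof.
  intros HTx Hx. assert (HPhi := Phi_neq0 x HTx Hx).
  replace (g x) with (/ phi2 T * ((dphi2 x * Phi x - phi2 x * (phi2 T * dphi1 x - phi1 T * dphi2 x))
                                  / Phi x ^ 2)).
  - apply is_derive_scal, is_derive_div; [apply (C1_on_is_derive T x0) | apply Phi_is_derive |]; auto.
  - revert HPhi. unfold g, W, Wr, Phi. intros HPhi. field. auto.
Qed.

Lemma g_continuous (x : R) : T < x -> Rbar_lt x x0 -> continuous g x.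
Proof.
  intros HTx Hx.
  assert (C1 := C1_on_continuous T x0 _ _ C1_phi1 x HTx Hx).
  assert (C2 := C1_on_continuous T x0 _ _ C1_phi2 x HTx Hx).
  assert (D1 := C1_on_continuous_derive T x0 _ _ C1_phi1 x HTx Hx).
  assert (D2 := C1_on_continuous_derive T x0 _ _ C1_phi2 x HTx Hx).
  apply (continuous_mult W (fun t => / (Phi t ^ 2))).
  - apply (continuous_minus (fun t => phi1 t * dphi2 t) (fun t => dphi1 t * phi2 t));
      now apply (continuous_mult (K := R_AbsRing)).
  - apply continuous_Rinv_comp; [| apply pow_nonzero, Phi_neq0; auto].
    apply (continuous_comp Phi (fun u => u ^ 2)); [now apply Phi_continuous |].
    apply (ex_derive_continuous (fun u => u ^ 2)). auto_derive. trivial.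
Qed.

Lemma g_factor (x : R) :
  T < x -> Rbar_lt x x0 -> g x = / phi2 T ^ 2 * Derive ratio x * / defect x ^ 2.
Proof.
  intros HTx Hx. assert (Hx1 := phi1_neq0 x ltac:(lra) Hx). assert (Hd := defect_neq0 x HTx Hx).
  rewrite (is_derive_unique _ _ _ (ratio_is_derive x HTx Hx)).
  unfold g. rewrite (Phi_factor x HTx Hx). field. auto.
Qed.

Lemma primitive_factor (x : R) :
  T < x -> Rbar_lt x x0 -> primitive x = / phi2 T ^ 2 * ratio x * / defect x.
Proof.
  intros HTx Hx. assert (Hx1 := phi1_neq0 x ltac:(lra) Hx). assert (Hd := defect_neq0 x HTx Hx).
  unfold primitive. rewrite (Phi_factor x HTx Hx). unfold ratio. field. auto.
Qed.

Hypothesis Hdom : is_domin (left_filter x0) phi1 phi2.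

Lemma ratio_comp_lim (k : R -> R) (l : R) :
  continuous k 0 -> k 0 = l -> filterlim (fun x => k (ratio x)) (left_filter x0) (locally l).
Proof.
  intros Hk <-. apply (filterlim_comp _ _ _ ratio k _ (locally 0)); [| exact Hk].
  apply filterlim_div_of_is_domin; [exact Hdom |].
  generalize (left_filter_right_of T x0 HT). apply filter_imp.
  intros x [HTx Hx]. apply phi1_neq0; [lra | exact Hx].
Qed.

Lemma is_RInt_gen_g (x : R) :
  T < x -> Rbar_lt x x0 ->
  is_RInt_gen g (at_point x) (left_filter x0) (- / phi2 T * (phi2 x / Phi x)).
Proof.
  intros HTx Hx.
  replace (- / phi2 T * (phi2 x / Phi x)) with (0 - primitive x) by (unfold primitive; ring).
  apply (is_RInt_gen_of_primitive (left_filter x0)).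
  - generalize (left_filter_right_of x x0 Hx). apply filter_imp.
    intros v [Hxv Hv]. split; [exact Hxv |]. intros c Hc.
    assert (Hc0 : Rbar_lt c x0) by (apply (Rle_Rbar_lt_trans _ v); [lra | exact Hv]).
    split; [apply primitive_is_derive | apply g_continuous]; auto; lra.
  - set (k u := / phi2 T ^ 2 * u * / (1 - phi1 T / phi2 T * u)).
    apply (filterlim_ext_loc (fun y => k (ratio y))).
    + generalize (left_filter_right_of T x0 HT). apply filter_imp.
      intros y [HTy Hy]. symmetry. now apply primitive_factor.
    + apply (ratio_comp_lim k); [| unfold k; field; exact Hphi2T].
      apply (ex_derive_continuous k). unfold k. auto_derive. lra.
Qed.

Lemma Phi_equiv : is_equiv (left_filter x0) Phi (fun x => phi2 T * phi1 x).
Proof.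
  apply (is_equiv_of_factor _ _ defect).
  - generalize (left_filter_right_of T x0 HT). apply filter_imp.
    intros x [HTx Hx]. now apply Phi_factor.
  - set (k u := 1 - phi1 T / phi2 T * u).
    apply (ratio_comp_lim k); [| unfold k; ring].
    apply (ex_derive_continuous k). unfold k. auto_derive. trivial.
Qed.

Lemma g_equiv :
  is_equiv (left_filter x0) g (fun x => / phi2 T ^ 2 * Derive ratio x).
Proof.
  apply (is_equiv_of_factor _ _ (fun x => / defect x ^ 2)).
  - generalize (left_filter_right_of T x0 HT). apply filter_imp.
    intros x [HTx Hx]. now apply g_factor.
  - set (k u := / (1 - phi1 T / phi2 T * u) ^ 2).
    apply (ratio_comp_lim k); [| unfold k; field; exact Hphi2T].
    apply (ex_derive_continuous k). unfold k. auto_derive. lra.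
Qed.

Lemma RInt_gen_g_equiv :
  is_equiv (left_filter x0) (fun x => RInt_gen g (at_point x) (left_filter x0))
    (fun x => - / phi2 T ^ 2 * ratio x).
Proof.
  apply (is_equiv_of_factor _ _ (fun x => / defect x)).
  - generalize (left_filter_right_of T x0 HT). apply filter_imp.
    intros x [HTx Hx].
    rewrite (is_RInt_gen_unique g _ (is_RInt_gen_g x HTx Hx)).
    replace (- / phi2 T * (phi2 x / Phi x)) with (- primitive x) by (unfold primitive; ring).
    rewrite (primitive_factor x HTx Hx). ring.
  - set (k u := / (1 - phi1 T / phi2 T * u)).
    apply (ratio_comp_lim k); [| unfold k; field; exact Hphi2T].
    apply (ex_derive_continuous k). unfold k. auto_derive. lra.
Qed.

End Wronskian_quotient.

Theorem lemma7p3 (x0 : Rbar) (T : R) (phi1 dphi1 phi2 dphi2 : R -> R) :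
  Rbar_lt T x0 ->
  C1_on T x0 phi1 dphi1 ->
  C1_on T x0 phi2 dphi2 ->
  is_domin (left_filter x0) phi1 phi2 ->
  (forall x, in_I T x0 x -> phi1 x <> 0) ->
  (forall x, in_I T x0 x -> phi2 x <> 0) ->
  (forall x, in_I T x0 x -> Wr phi1 dphi1 phi2 dphi2 x <> 0) ->
  let W := Wr phi1 dphi1 phi2 dphi2 in
  let Phi := fun x => phi2 T * phi1 x - phi1 T * phi2 x in
  let g := fun t => W t * / (Phi t ^ 2) in
  is_equiv (left_filter x0) Phi (fun x => phi2 T * phi1 x) /\
  is_equiv (left_filter x0) g
    (fun x => / (phi2 T ^ 2) * Derive (fun y => phi2 y / phi1 y) x) /\
  is_equiv (left_filter x0) (fun x => RInt_gen g (at_point x) (left_filter x0))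
    (fun x => - / (phi2 T ^ 2) * (phi2 x / phi1 x)) /\
  (forall x, T < x -> Rbar_lt x x0 ->
     is_RInt_gen g (at_point x) (left_filter x0)
       (- / (phi2 T) * (phi2 x / Phi x))).
Proof.
  intros HT H1 H2 Hdom Hphi1 Hphi2 HW W Phi g.
  assert (Hphi2T : phi2 T <> 0) by (apply Hphi2; split; [apply Rle_refl | exact HT]).
  split; [| split; [| split]].
  - now apply Phi_equiv.
  - now apply g_equiv.
  - now apply RInt_gen_g_equiv.
  - now apply is_RInt_gen_g.
Qed.
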